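(* Every $SC^*$-compact Hausdorff space is an $SC^*$-$T_3$ space, and consequently an $SC^*$-regular space.
   Context: For $A\subseteq X$ in a topological space $X$: $A$ is semi-open if $A\subseteq cl(int(A))$, semi-closed if its complement is semi-open; $scl(A)$ is the smallest semi-closed set containing $A$. $A$ is $c^*$-open if $int(cl(A))\subseteq A\subseteq cl(int(A))$. $A$ is $SC^*$-closed if $scl(A)\subseteq U$ whenever $A\subseteq U$ and $U$ is $c^*$-open; $A$ is $SC^*$-open if $X\setminus A$ is $SC^*$-closed. $X$ is $SC^*$-compact if every cover of $X$ by $SC^*$-open sets has a finite subcover. $X$ is $SC^*$-regular if for every closed set $F$ and every point $x\notin F$ there exist disjoint $SC^*$-open sets $U,V$ with $F\subseteq U$ and $x\in V$. $X$ is $SC^*$-$T_1$ if for any distinct $x,y$ there are $SC^*$-open sets $U,V$ with $x\in U$, $y\notin U$, $y\in V$, $x\notin V$; $X$ is $SC^*$-$T_3$ if it is both $SC^*$-regular and $SC^*$-$T_1$. *)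

From HB Require Import structures.
From mathcomp Require Import all_boot all_order.
From mathcomp Require Import all_classical topology.
Set Implicit Arguments. Unset Strict Implicit. Unset Printing Implicit Defensive.
Local Open Scope classical_set_scope.

Section SCstar.
Variable T : topologicalType.

Definition semi_open (A : set T) : Prop := A `<=` closure (interior A).
Definition semi_closed (A : set T) : Prop := semi_open (~` A).
Definition scl (A : set T) : set T :=
  \bigcap_(F in [set F | semi_closed F /\ A `<=` F]) F.
Definition cstar_open (A : set T) : Prop :=
  interior (closure A) `<=` A /\ A `<=` closure (interior A).
Definition SCstar_closed (A : set T) : Prop :=
  forall U : set T, A `<=` U -> cstar_open U -> scl A `<=` U.
Definition SCstar_open (A : set T) : Prop := SCstar_closed (~` A).

Definition SCstar_compact : Prop :=
  forall (I : Type) (G : I -> set T),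
    (forall i, SCstar_open (G i)) -> \bigcup_(i in [set: I]) G i = [set: T] ->
    exists2 D : set I, finite_set D & \bigcup_(i in D) G i = [set: T].

Definition SCstar_regular : Prop :=
  forall (F : set T) (x : T), closed F -> ~ F x ->
    exists U V : set T, [/\ SCstar_open U, SCstar_open V, F `<=` U, V x &
                          U `&` V = set0].

Definition SCstar_T1 : Prop :=
  forall x y : T, x <> y ->
    exists U V : set T, [/\ SCstar_open U, SCstar_open V,
                          U x /\ ~ U y & V y /\ ~ V x].

Definition SCstar_T3 : Prop := SCstar_regular /\ SCstar_T1.
End SCstar.

From HB Require Import structures.
From mathcomp Require Import all_boot all_order.
From mathcomp Require Import all_classical topology.
Local Open Scope classical_set_scope.

(* Closed sets are semi-closed, so they are their own semi-closure and hence
   SC*-closed; dually open sets are SC*-open.  An SC*-compact space is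
   therefore compact, and a compact Hausdorff space separates closed sets from
   points, and points from points, by disjoint open -- hence SC*-open -- sets. *)

Section SCstar_open_sets.
Variable T : topologicalType.
Implicit Types A F : set T.

Lemma open_semi_open A : open A -> semi_open A.
Proof. by move=> /interior_id AE; rewrite /semi_open AE; exact: subset_closure. Qed.

Lemma closed_semi_closed A : closed A -> semi_closed A.
Proof. by move=> cA; apply: open_semi_open; exact: closed_openC. Qed.

Lemma scl_sub A F : semi_closed F -> A `<=` F -> scl A `<=` F.
Proof. by move=> sF AF x; apply. Qed.

Lemma closed_SCstar_closed A : closed A -> SCstar_closed A.
Proof.
move=> cA U AU _; apply: subset_trans AU.
by apply: scl_sub; [exact: closed_semi_closed | exact: subset_refl].
Qed.

Lemma open_SCstar_open A : open A -> SCstar_open A.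
Proof. by move=> oA; apply: closed_SCstar_closed; exact: open_closedC. Qed.

End SCstar_open_sets.

Lemma SCstar_compact_cover_compact {T : topologicalType} :
  SCstar_compact T -> cover_compact [set: T].
Proof.
move=> scT I D f fo cov.
pose G i := if pselect (D i) then f i else set0.
have GO i : SCstar_open (G i).
  apply: open_SCstar_open; rewrite /G; case: pselect => Di; [exact: fo | exact: open0].
have GT : \bigcup_(i in [set: I]) G i = [set: T].
  apply/seteqP; split=> // x /cov [i Di fxi].
  by exists i => //; rewrite /G; case: pselect.
have [E finE ET] := scT I G GO GT.
exists (fset_set (E `&` D)) => [i|x _].
  by rewrite in_fset_set ?inE; [case | exact: finite_setIl].
have : [set: T] x by [].
rewrite -ET => -[i Ei]; rewrite /G; case: pselect => // Di fxi.
by exists i => //=; rewrite in_fset_set ?inE //; exact: finite_setIl.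
Qed.

(* [compact_cover] is only available for pointed spaces: make [T] pointed at
   [x0] to use it. *)
Section pointed_at.
Variables (T : topologicalType) (x0 : T).

Definition pointed_at : Type := T.
HB.instance Definition _ := Topological.on pointed_at.
HB.instance Definition _ := isPointed.Build pointed_at x0.

Lemma cover_compact_compact (A : set T) : cover_compact A -> compact A.
Proof. by move=> cA; have : @compact pointed_at A by rewrite compact_cover. Qed.

End pointed_at.
Arguments cover_compact_compact {T} x0 {A}.

Lemma compact_hausdorff_separate_closed_point {T : topologicalType}
    {F : set T} {x : T} :
  hausdorff_space T -> cover_compact [set: T] -> closed F -> ~ F x ->
  exists U V : set T, [/\ open U, open V, F `<=` U, V x & U `&` V = set0].
Proof.
move=> hT cT cF Fx.
have [|W Wx clWF] :=
  @compact_regular T x setT hT (cover_compact_compact x cT) filterT (~` F).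
  by apply: open_nbhs_nbhs; split=> //; exact: closed_openC.
exists (~` closure W), (interior W); split.
- exact/closed_openC/closed_closure.
- exact: open_interior.
- by move=> y Fy clWy; exact: clWF clWy Fy.
- exact: Wx.
- apply/seteqP; split=> // y [+ /interior_subset Wy]; apply.
  exact: subset_closure.
Qed.

Lemma compact_hausdorff_SCstar_regular {T : topologicalType} :
  hausdorff_space T -> cover_compact [set: T] -> SCstar_regular T.
Proof.
move=> hT cT F x cF Fx.
have [U [V [oU oV FU Vx UV]]] := compact_hausdorff_separate_closed_point hT cT cF Fx.
by exists U, V; split=> //; exact: open_SCstar_open.
Qed.

Lemma hausdorff_SCstar_T1 {T : topologicalType} :
  hausdorff_space T -> SCstar_T1 T.
Proof.
rewrite open_hausdorff => hT x y /eqP /hT [[A B] /= [+ +] [oA oB /eqP AB]].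
rewrite !inE => Ax By; exists A, B; split; try exact: open_SCstar_open.
- by split=> // Ay; have : (A `&` B) y by []; rewrite AB.
- by split=> // Bx; have : (A `&` B) x by []; rewrite AB.
Qed.

Theorem theorem2p15 (T : topologicalType) :
  SCstar_compact T -> hausdorff_space T -> SCstar_T3 T /\ SCstar_regular T.
Proof.
move=> scT hT.
have reg := compact_hausdorff_SCstar_regular hT (SCstar_compact_cover_compact scT).
by split=> //; split=> //; exact: hausdorff_SCstar_T1.
Qed.
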